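(* Let $\hat v\in\{0,1\}^{\mathcal T}$ be the indicator vector of a proper triple set, and let $(\lambda,\mu)$ be an optimal solution of the linear program $\mathrm{D}(\hat v)$ such that $\lambda_{t,1}=\lambda_{t,2}=\lambda_{t,3}=0$ for every $t$ with $\hat v_t=0$. Then $\lambda_{t,3}\le\eta$ for all $t\in\mathcal T$ and $\mu_J\le\eta$ for all $J\in\mathcal N$, where $\eta=-\sum_{i=1}^m\min(0,\alpha_i)$.
   Context: A multilinear program has data $n,m$, coefficients $\alpha_i\in\mathbb{R}$ and nonempty index sets $J_i\subseteq[n]$. Let $\mathcal N=\bigcup_i\{J:\emptyset\ne J\subseteq J_i\}$ and $\beta_J=\sum_{i:J_i=J}\alpha_i$. A triple is $t=(J,J',J'')$ with $J''\in\mathcal N$, $|J''|\ge2$, $J,J'$ nonempty, disjoint, $J\cup J'=J''$, listed with $J,J'$ in lexicographic order; $\mathsf{tail1}(t)=J$, $\mathsf{tail2}(t)=J'$, $\mathsf{head}(t)=J''$; $\mathcal T$ is the set of all triples. A proper triple set is a set $T\subseteq\mathcal T$ containing a subset $T'$ such that (1) every $J_i$ with $|J_i|>1$ is the head of some triple in $T'$, and (2) whenever a set $J$ with $|J|>1$ is the first or second element of a triple in $T'$, $J$ is the head of a different triple in $T'$; its indicator vector has $\hat v_t=1$ iff $t\in T$. $\mathrm{D}(\hat v)$: maximize $-\sum_{t\in\mathcal T}[(1-\hat v_t)(\lambda_{t,1}+\lambda_{t,2})+(2-\hat v_t)\lambda_{t,3}]-\sum_{J\in\mathcal N}\mu_J$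 over $\lambda\ge0,\mu\ge0$ subject to, for every $J\in\mathcal N$, $\beta_J+\sum_{t:\mathsf{tail1}(t)=J}(-\lambda_{t,1}+\lambda_{t,3})+\sum_{t:\mathsf{tail2}(t)=J}(-\lambda_{t,2}+\lambda_{t,3})+\sum_{t:\mathsf{head}(t)=J}(\lambda_{t,1}+\lambda_{t,2}-\lambda_{t,3})+\mu_J\ge0$. *)

From HB Require Import structures.
From mathcomp Require Import all_boot all_order all_algebra.
Set Implicit Arguments. Unset Strict Implicit. Unset Printing Implicit Defensive.
Import Order.TTheory GRing.Theory Num.Theory.
Local Open Scope ring_scope.

Fixpoint lex_lt (s t : seq nat) : bool :=
  match s, t with
  | [::], [::] => false
  | [::], _ :: _ => true
  | _ :: _, [::] => false
  | x :: s', y :: t' => (x < y)%N || ((x == y) && lex_lt s' t')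
  end.

Definition sorted_elems n (A : {set 'I_n}) : seq nat := sort leq (map val (enum A)).
Definition set_lex_lt n (A B : {set 'I_n}) : bool :=
  lex_lt (sorted_elems A) (sorted_elems B).

Notation triple n := ({set 'I_n} * {set 'I_n} * {set 'I_n})%type.
Definition tail1 n (t : triple n) : {set 'I_n} := t.1.1.
Definition tail2 n (t : triple n) : {set 'I_n} := t.1.2.
Definition head n (t : triple n) : {set 'I_n} := t.2.

Section MLP.
Variables (R : realFieldType) (n m : nat).
Variables (alpha : 'I_m -> R) (Js : 'I_m -> {set 'I_n}).

Definition in_N (J : {set 'I_n}) : bool :=
  (J != set0) && [exists i, J \subset Js i].

Definition beta (J : {set 'I_n}) : R := \sum_(i < m | Js i == J) alpha i.

Definition is_triple (t : triple n) : bool :=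
  [&& in_N (head t), (1 < #|head t|)%N, tail1 t != set0, tail2 t != set0,
      [disjoint tail1 t & tail2 t], tail1 t :|: tail2 t == head t
    & set_lex_lt (tail1 t) (tail2 t)].

Definition proper_triple_set (T : {set triple n}) : Prop :=
  (forall t, t \in T -> is_triple t) /\
  exists T' : {set triple n}, T' \subset T /\
    (forall i, (1 < #|Js i|)%N -> exists t, t \in T' /\ head t = Js i) /\
    (forall t, t \in T' -> forall J, (J = tail1 t \/ J = tail2 t) ->
       (1 < #|J|)%N -> exists t', [/\ t' \in T', t' != t & head t' = J]).

Definition vhat (T : {set triple n}) (t : triple n) : R := (t \in T)%:R.

Definition D_feasible (lam1 lam2 lam3 : triple n -> R) (mu : {set 'I_n} -> R) : Prop :=
  (forall t, is_triple t -> [/\ 0 <= lam1 t, 0 <= lam2 t & 0 <= lam3 t]) /\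
  (forall J, in_N J -> 0 <= mu J) /\
  (forall J, in_N J ->
     0 <= beta J
          + \sum_(t | is_triple t && (tail1 t == J)) (- lam1 t + lam3 t)
          + \sum_(t | is_triple t && (tail2 t == J)) (- lam2 t + lam3 t)
          + \sum_(t | is_triple t && (head t == J)) (lam1 t + lam2 t - lam3 t)
          + mu J).

Definition D_objective (v : triple n -> R) (lam1 lam2 lam3 : triple n -> R)
  (mu : {set 'I_n} -> R) : R :=
  - (\sum_(t | is_triple t)
       ((1 - v t) * (lam1 t + lam2 t) + (2 - v t) * lam3 t))
  - \sum_(J | in_N J) mu J.

Definition D_optimal (v : triple n -> R) (lam1 lam2 lam3 : triple n -> R)
  (mu : {set 'I_n} -> R) : Prop :=
  D_feasible lam1 lam2 lam3 mu /\
  forall l1 l2 l3 mu', D_feasible l1 l2 l3 mu' ->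
    D_objective v l1 l2 l3 mu' <= D_objective v lam1 lam2 lam3 mu.


End MLP.
Definition eta_bound (R : realFieldType) (m : nat) (alpha : 'I_m -> R) : R := - \sum_(i < m) Num.min 0 (alpha i).

From HB Require Import structures.
From mathcomp Require Import all_boot all_order all_algebra.
Set Implicit Arguments. Unset Strict Implicit. Unset Printing Implicit Defensive.
Import Order.TTheory GRing.Theory Num.Theory.
Local Open Scope ring_scope.

(* Setting every lambda to 0 and mu_J := max(0, -beta_J) gives a feasible point
   of D(v) of cost sum_J max(0, -beta_J) <= eta.  Hence the optimal solution
   has cost at most eta; since lambda vanishes off the triple set, its cost is
   the sum of the nonnegative numbers lambda_{t,3} and mu_J, each of which is
   therefore at most eta. *)

Lemma ler_term_psum (R : numDomainType) (I : finType) (P : pred I) (F : I -> R) j :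
  P j -> (forall i, P i -> 0 <= F i) -> F j <= \sum_(i | P i) F i.
Proof.
move=> Pj F_ge0; rewrite (bigD1 j) //= lerDl.
by apply: sumr_ge0 => i /andP[/F_ge0].
Qed.

Section DualBound.
Variables (R : realFieldType) (n m : nat).
Variables (alpha : 'I_m -> R) (Js : 'I_m -> {set 'I_n}).

Local Notation eta := (eta_bound alpha).

Definition trivial_mu (J : {set 'I_n}) : R := Num.max 0 (- beta alpha Js J).

Definition dual_cost (v lam1 lam2 lam3 : triple n -> R) (t : triple n) : R :=
  (1 - v t) * (lam1 t + lam2 t) + (2 - v t) * lam3 t.

Lemma D_objectiveE v lam1 lam2 lam3 mu :
  D_objective Js v lam1 lam2 lam3 mu =
  - (\sum_(t | is_triple Js t) dual_cost v lam1 lam2 lam3 t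
     + \sum_(J | in_N Js J) mu J).
Proof. by rewrite opprD. Qed.

Lemma trivial_D_feasible :
  D_feasible alpha Js (fun=> 0) (fun=> 0) (fun=> 0) trivial_mu.
Proof.
split; first by move=> t _; rewrite lexx.
split; first by move=> J _; rewrite le_max lexx.
move=> J _; rewrite !big1 ?addr0 ?subr0 ?oppr0 ?addr0 //.
by rewrite -lerBlDl sub0r le_max lexx orbT.
Qed.

Lemma sum_trivial_mu_le_eta : \sum_(J | in_N Js J) trivial_mu J <= eta.
Proof.
pose neg_part i := - Num.min 0 (alpha i).
have neg_part_ge0 i : 0 <= neg_part i by rewrite oppr_ge0 ge_min lexx.
have trivial_mu_le J : trivial_mu J <= \sum_(i | Js i == J) neg_part i.
  rewrite ge_max sumr_ge0 //= /beta -sumrN; apply: ler_sum => i _.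
  by rewrite lerN2 ge_min lexx orbT.
apply: (@le_trans _ _ (\sum_J \sum_(i | Js i == J) neg_part i)).
  rewrite [X in _ <= X](bigID (in_N Js)) /= -[X in X <= _]addr0.
  apply: lerD; first exact: ler_sum.
  by apply: sumr_ge0 => J _; apply: sumr_ge0.
rewrite /eta_bound -sumrN (exchange_big_dep xpredT) //=; apply: ler_sum => i _.
by rewrite (big_pred1 (Js i)) // => J; rewrite eq_sym.
Qed.

Lemma D_optimal_cost_le_eta v lam1 lam2 lam3 mu :
  D_optimal alpha Js v lam1 lam2 lam3 mu ->
  \sum_(t | is_triple Js t) dual_cost v lam1 lam2 lam3 t
    + \sum_(J | in_N Js J) mu J <= eta.
Proof.
case=> _ /(_ _ _ _ _ trivial_D_feasible); rewrite !D_objectiveE lerN2.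
move/le_trans; apply; rewrite big1 ?add0r ?sum_trivial_mu_le_eta // => t _.
by rewrite /dual_cost !(mulr0, addr0).
Qed.

Lemma dual_cost_vhat (T : {set triple n}) lam1 lam2 lam3 t :
  (t \notin T -> [/\ lam1 t = 0, lam2 t = 0 & lam3 t = 0]) ->
  dual_cost (vhat R T) lam1 lam2 lam3 t = lam3 t.
Proof.
rewrite /dual_cost /vhat; case: (boolP (t \in T)) => [_ _ | _ /(_ isT) [-> -> ->]].
  by rewrite subrr mul0r add0r [2]mulr2n -addrA subrr addr0 mul1r.
by rewrite !(mulr0, addr0).
Qed.

End DualBound.

Theorem lemma4 (R : realFieldType) (n m : nat) (alpha : 'I_m -> R)
  (Js : 'I_m -> {set 'I_n}) (HJs : forall i, Js i != set0)
  (T : {set triple n}) (HT : proper_triple_set Js T)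
  (lam1 lam2 lam3 : triple n -> R) (mu : {set 'I_n} -> R)
  (Hopt : D_optimal alpha Js (vhat R T) lam1 lam2 lam3 mu)
  (Hzero : forall t, is_triple Js t -> t \notin T ->
     [/\ lam1 t = 0, lam2 t = 0 & lam3 t = 0]) :
  (forall t, is_triple Js t -> lam3 t <= eta_bound alpha) /\
  (forall J, in_N Js J -> mu J <= eta_bound alpha).
Proof.
have cost_le := D_optimal_cost_le_eta Hopt.
rewrite (eq_bigr lam3) in cost_le; last by move=> t /Hzero /dual_cost_vhat.
have [[lam_ge0 [mu_ge0 _]] _] := Hopt.
have lam3_ge0 t : is_triple Js t -> 0 <= lam3 t by case/lam_ge0.
have sum_lam3_ge0 : 0 <= \sum_(t | is_triple Js t) lam3 t by exact: sumr_ge0.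
have sum_mu_ge0 : 0 <= \sum_(J | in_N Js J) mu J by exact: sumr_ge0.
split=> [t Ht | J HJ]; apply: le_trans cost_le.
- by rewrite -[lam3 t]addr0 lerD // ler_term_psum.
- by rewrite -[mu J]add0r lerD // ler_term_psum.
Qed.
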